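(* Let $F_1,\ldots,F_p$ be continuous univariate cumulative distribution functions and let $g:[0,1]^p\to\mathbb R$. If the map $\mathbf x\mapsto g(F_1(x_1),\ldots,F_p(x_p))$ is continuous on $[-\infty,\infty]^p$, then $g$ is continuous on $[0,1]^p$.
   Context: Cumulative distribution functions are extended to $[-\infty,\infty]$ by $F_j(-\infty)=0$, $F_j(+\infty)=1$. *)

From HB Require Import structures.
From mathcomp Require Import all_boot all_order all_algebra.
From mathcomp Require Import all_classical all_reals all_analysis.
Set Implicit Arguments. Unset Strict Implicit. Unset Printing Implicit Defensive.
Import Order.TTheory GRing.Theory Num.Theory numFieldNormedType.Exports.
Local Open Scope classical_set_scope.
Local Open Scope ring_scope.

Definition is_cdf (R : realType) (F : R -> R) : Prop :=
  [/\ {homo F : x y / x <= y},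
      (forall x : R, F y @[y --> x^'+] --> F x),
      F x @[x --> -oo] --> (0 : R) &
      F x @[x --> +oo] --> (1 : R)].

Definition is_continuous_cdf (R : realType) (F : R -> R) : Prop :=
  is_cdf F /\ continuous F.

Definition cdf_ext (R : realType) (F : R -> R) (x : \bar R) : R :=
  match x with
  | EFin r => F r
  | +oo%E => 1
  | -oo%E => 0
  end.

From HB Require Import structures.
From mathcomp Require Import all_boot all_order all_algebra.
From mathcomp Require Import all_classical all_reals all_analysis.
Import Order.TTheory GRing.Theory Num.Theory numFieldNormedType.Exports.
Local Open Scope classical_set_scope.
Local Open Scope ring_scope.

(* The map x |-> (F_j (x_j))_j is continuous from the compact space
   [-oo, +oo]^p onto [0, 1]^p, surjective by the intermediate value theorem.
   A continuous map from a compact space to a Hausdorff space is closed, hence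
   a quotient map onto its range, so continuity of g after it descends to g. *)

Lemma continuous_within_range (X Y Z : topologicalType) (phi : X -> Y)
    (g : Y -> Z) :
  compact [set: X] -> hausdorff_space Y -> continuous phi ->
  continuous (g \o phi) -> {within range phi, continuous g}.
Proof.
move=> Xc Yhaus phic gphic; apply/subspace_continuousP => _ [x0 _ <-] B.
rewrite nbhsE; case=> O [Oopen Ox0] OB.
pose C := ~` ((g \o phi) @^-1` O).
have Cc : compact C.
  apply: subclosed_compact Xc (@subsetT _ C).
  by rewrite closedC; apply: open_comp => // x _; exact: gphic.
have phiCclosed : closed (phi @` C).
  exact/(compact_closed Yhaus)/(continuous_compact _ Cc)/continuous_subspaceT.
have : nbhs (phi x0) (~` (phi @` C)).
  apply: open_nbhs_nbhs; split; first by rewrite openC.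
  by move=> [x Cx /(congr1 g) gx]; apply: Cx; rewrite /= gx.
rewrite nbhs_simpl nbhs_filterE; apply: filterS => y notphiC [x _ phixy]; subst y.
by apply: OB; apply: contra_notP notphiC => Ogx; exists x.
Qed.

Lemma ptws_continuous (X : topologicalType) (I : Type) (T : topologicalType)
    (G : X -> {ptws I -> T}) :
  (forall i, continuous (fun x => G x i)) -> continuous G.
Proof.
by move=> hG x; apply/cvg_sup => i; exact: (continuous_comp_initial (hG i)).
Qed.

(* [-oo, +oo] is the image of [-1, 1] under [expand], an isometry for the
   metric |contract x - contract y| of the extended reals. *)
Lemma ereal_compact (R : realType) : compact [set: \bar R].
Proof.
have -> : [set: \bar R] = @expand R @` `[-1, 1].
  apply/seteqP; split => [x _|//]; exists (contract x); last exact: contractK.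
  by rewrite /= in_itv /= -ler_norml contract_le1.
apply: continuous_compact; last exact: segment_compact.
apply/subspace_continuousP => r; rewrite /= in_itv /= -ler_norml => r1.
apply/cvg_ballP => e e0; rewrite near_withinE; near=> s => /=.
rewrite in_itv /= -ler_norml => s1.
by rewrite /ball /= /ereal_ball !expandK ?inE.
Unshelve. all: by end_near.
Qed.

Lemma ereal_ptws_compact (R : realType) (I : eqType) :
  compact [set: {ptws I -> \bar R}].
Proof.
have := tychonoff (fun _ : I => @ereal_compact R).
by congr compact; apply/seteqP.
Qed.

Lemma cdf_ext_continuous {R : realType} {F : R -> R} :
  is_continuous_cdf F -> continuous (cdf_ext F).
Proof.
move=> [[_ _ F0 F1] Fc] [r| |] B /= FB; rewrite nbhs_simpl /=.
- exact/nbhs_EFin/Fc.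
- by apply/nbhs_ereal_pinfty; split; [exact: nbhs_singleton FB|exact: F1].
- by apply/nbhs_ereal_ninfty; split; [exact: nbhs_singleton FB|exact: F0].
Qed.

Lemma cdf_ge0 {R : realType} {F : R -> R} (x : R) : is_cdf F -> 0 <= F x.
Proof.
move=> [Fhomo _ F0 _]; apply: cvgr_to_le F0 _.
by apply: filterS (nbhs_ninfty_le (num_real x)) => y; exact: Fhomo.
Qed.

Lemma cdf_le1 {R : realType} {F : R -> R} (x : R) : is_cdf F -> F x <= 1.
Proof.
move=> [Fhomo _ _ F1]; apply: cvgr_to_ge F1 _.
by apply: filterS (nbhs_pinfty_ge (num_real x)) => y; exact: Fhomo.
Qed.

Lemma cdf_ext_onto {R : realType} {F : R -> R} (t : R) :
  is_continuous_cdf F -> 0 <= t <= 1 -> exists x, cdf_ext F x = t.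
Proof.
move=> [[Fhomo _ F0 F1] Fc]; rewrite !le_eqVlt => /andP[/predU1P[<-|t0]].
  by move=> _; exists -oo%E.
case/predU1P => [->|t1]; first by exists +oo%E.
have [a Fa] : exists a, F a < t.
  exact: filter_ex (cvgr_lt _ F0 _ t0).
have [b Fb] : exists b, t < F b.
  exact: filter_ex (cvgr_gt _ F1 _ t1).
have ab : a <= b.
  by rewrite leNgt; apply/negP => /ltW/Fhomo; rewrite leNgt (lt_trans Fa Fb).
have Fab : F a <= F b := Fhomo _ _ ab.
have t_between : Num.min (F a) (F b) <= t <= Num.max (F a) (F b).
  by rewrite (min_l Fab) (max_r Fab) !ltW.
have [c _ <-] := IVT ab (continuous_subspaceT Fc) t_between.
by exists c%:E.
Qed.

Section cdf_product.
Context {R : realType} {I : eqType} {F : I -> R -> R}.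
Hypothesis hF : forall i, is_continuous_cdf (F i).

Definition cdf_ptws (x : {ptws I -> \bar R}) : {ptws I -> R} :=
  fun i => cdf_ext (F i) (x i).

Lemma cdf_ptws_continuous : continuous cdf_ptws.
Proof.
apply: ptws_continuous => i x.
have := continuous_comp (@proj_continuous _ (fun=> \bar R) i x)
  (cdf_ext_continuous (hF i) (x i)).
exact.
Qed.

Lemma range_cdf_ptws : range cdf_ptws = [set u | forall i, 0 <= u i <= 1].
Proof.
apply/seteqP; split => [_ [x _ <-] i|u u01].
  have [Fcdf _] := hF i.
  rewrite /cdf_ptws; case: (x i) => [r||] /=.
  - by rewrite (cdf_ge0 _ Fcdf) (cdf_le1 _ Fcdf).
  - by rewrite ler01 lexx.
  - by rewrite lexx ler01.
have [x hx] := choice (fun i => cdf_ext_onto _ (hF i) (u01 i)).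
by exists x => //; apply: funext => i; exact: hx.
Qed.

End cdf_product.

Theorem lemma4p1 (R : realType) (p : nat) (F : 'I_p -> R -> R)
  (hF : forall j, is_continuous_cdf (F j))
  (g : {ptws 'I_p -> R} -> R)
  (hcont : continuous (fun x : {ptws 'I_p -> \bar R} =>
             g ((fun j => cdf_ext (F j) (x j)) : {ptws 'I_p -> R}))) :
  {within [set u : {ptws 'I_p -> R} | forall j, 0 <= u j <= 1], continuous g}.
Proof.
rewrite -(range_cdf_ptws hF).
apply: continuous_within_range (ereal_ptws_compact _ _) _
  (cdf_ptws_continuous hF) hcont.
by apply: hausdorff_product => _; exact: Rhausdorff.
Qed.
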